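(* For every $\lambda\in\mathcal{R}$ and every convex overmarked box $\Theta$, the pair $(\pi(A_\Theta),\pi(B^\lambda_\Theta))$ (i.e. the representation $\rho^\lambda_\Theta$) is a smooth point of the real algebraic variety $\mathrm{Hom}(\Gamma_o,\mathrm{SL}(3,\mathbb{R}))=\{(A,B)\in\mathrm{SL}(3,\mathbb{R})^2: A^3=B^3=\mathrm{Id}\}$.
   Context: $\Gamma_o=\langle a,b\mid a^3=b^3=1\rangle$ (the index-2 subgroup of $\mathrm{PSL}(2,\mathbb{Z})$ generated by $R$ and $IRI$), and $\mathrm{PGL}(3,\mathbb{R})$ is identified with $\mathrm{SL}(3,\mathbb{R})$ via $\pi:\mathrm{GL}(3,\mathbb{R})\to\mathrm{SL}(3,\mathbb{R})$, $M\mapsto(\det M)^{-1/3}M$; a representation is identified with the pair of images of the generators, so $\mathrm{Hom}(\Gamma_o,\mathrm{SL}(3,\mathbb{R}))$ is the stated subvariety of $\mathrm{M}(3,\mathbb{R})^2$. A convex overmarked box $\Theta$ is determined, in a suitable basis, by parameters $(\zeta_t,\zeta_b)\in\,]-1,1[^2$ (namely, it consists of points $p=[-1:1:0]$, $q=[1:1:0]$, $r=[1:0:1]$, $s=[-1:0:1]$, $t=[\zeta_t:1:0]$, $b=[\zeta_b:0:1]$ and lines $P=ts$, $Q=tr$, $R=bq$, $S=bp$, $T=pq$, $B=rs$). Matrices: $A_\Theta=\begin{pmatrix}\zeta_t\zeta_b-1&\zeta_t(1-\zeta_t\zeta_b)&\zeta_b-\zeta_t\\ \zeta_b-\zeta_t&1-\zeta_t\zeta_b&\zeta_t\zeta_b-1\\0&1-\zeta_t^2&0\end{pmatrix}$,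 $D_\Theta=\begin{pmatrix}1&-\zeta_t&-\zeta_b\\-\zeta_t&1&\zeta_t\zeta_b\\-\zeta_b&\zeta_t\zeta_b&1\end{pmatrix}$, $\Sigma_{(\varepsilon,\delta)}=\begin{pmatrix}1&0&0\\0&e^{-\delta}\cosh\varepsilon&-\sinh\varepsilon\\0&-\sinh\varepsilon&e^{\delta}\cosh\varepsilon\end{pmatrix}$, and $B^\lambda_\Theta=\Sigma_\lambda^{-1}D_\Theta^{-1}\,{}^tA_\Theta^{-1}D_\Theta\Sigma_\lambda$. The representation $\rho^\lambda_\Theta$ corresponds to $(\pi(A_\Theta),\pi(B^\lambda_\Theta))$. $f(\varepsilon,\delta)=e^{-\delta}\cosh\varepsilon-\sinh\varepsilon-1$ and $\mathcal{R}=\{(\varepsilon,\delta):f(\varepsilon,\delta)\ge0,\ f(\varepsilon,-\delta)\ge0\}$. *)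

From mathcomp Require Import all_boot all_order all_algebra.
From mathcomp Require Import reals sequences exp.

Set Implicit Arguments.
Unset Strict Implicit.
Unset Printing Implicit Defensive.

Import Order.TTheory GRing.Theory Num.Theory.
From mathcomp Require Import mpoly.
Local Open Scope ring_scope.

Definition smooth_point (R : realType) (N : nat) (V : 'rV[R]_N -> Prop)
    (x : 'rV[R]_N) : Prop :=
  V x /\
  exists (c : nat) (f : 'I_c -> {mpoly R[N]}),
    [/\ (forall y, V y -> forall k, (f k).@[fun i => y 0 i] = 0),
        \rank (\matrix_(k < c, i < N) (mderiv i (f k)).@[fun j => x 0 j]) = c
      & exists2 eps : R, 0 < eps &
          forall y : 'rV[R]_N, (forall i, `|y 0 i - x 0 i| < eps) ->
            (V y <-> forall k, (f k).@[fun i => y 0 i] = 0)].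

Definition pair_coord (R : realType) (A B : 'M[R]_3) : 'rV[R]_(3 * 3 + 3 * 3) :=
  row_mx (mxvec A) (mxvec B).

Definition HomVar (R : realType) (y : 'rV[R]_(3 * 3 + 3 * 3)) : Prop :=
  exists A B : 'M[R]_3,
    [/\ y = pair_coord A B, \det A = 1, \det B = 1, A ^+ 3 = 1 & B ^+ 3 = 1].

Definition cbrt (R : realType) (x : R) : R := Num.sg x * powR `|x| 3^-1.

Definition piSL (R : realType) (M : 'M[R]_3) : 'M[R]_3 :=
  (cbrt (\det M))^-1 *: M.

Definition mx3 (R : realType) (a11 a12 a13 a21 a22 a23 a31 a32 a33 : R)
    : 'M[R]_3 :=
  \matrix_(i < 3, j < 3)
    nth 0 (nth [::] [:: [:: a11; a12; a13]; [:: a21; a22; a23];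
                        [:: a31; a32; a33]] i) j.

Definition coshR (R : realType) (x : R) : R := (expR x + expR (- x)) / 2.
Definition sinhR (R : realType) (x : R) : R := (expR x - expR (- x)) / 2.

Definition A_Theta (R : realType) (zt zb : R) : 'M[R]_3 :=
  mx3 (zt * zb - 1) (zt * (1 - zt * zb)) (zb - zt)
      (zb - zt)     (1 - zt * zb)        (zt * zb - 1)
      0             (1 - zt ^+ 2)        0.

Definition D_Theta (R : realType) (zt zb : R) : 'M[R]_3 :=
  mx3 1 (- zt) (- zb)
      (- zt) 1 (zt * zb)
      (- zb) (zt * zb) 1.

Definition Sigma (R : realType) (eps del : R) : 'M[R]_3 :=
  mx3 1 0 0
      0 (expR (- del) * coshR eps) (- sinhR eps)
      0 (- sinhR eps) (expR del * coshR eps).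

Definition B_Theta (R : realType) (zt zb eps del : R) : 'M[R]_3 :=
  invmx (Sigma eps del) *m invmx (D_Theta zt zb) *m invmx ((A_Theta zt zb)^T)
    *m D_Theta zt zb *m Sigma eps del.

Definition fR (R : realType) (eps del : R) : R :=
  expR (- del) * coshR eps - sinhR eps - 1.

Definition in_region (R : realType) (eps del : R) : Prop :=
  0 <= fR eps del /\ 0 <= fR eps (- del).

(* Near a pair (A, B) of matrices with characteristic polynomial X^3 - 1, the variety
   Hom(Gamma_o, SL(3,R)) is cut out by the six polynomials tr X^3 - 3, 3 tr X^2 - (tr X)^2
   and tr X (tr X - 3), taken in the entries of A and in those of B.  Over the reals,
   M^3 = 1 = det M forces M = 1 or char M = X^3 - 1, and both kill these polynomials;
   conversely, near a trace-zero point their vanishing gives tr M = tr M^2 = 0 and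
   tr M^3 = 3, hence det M = 1 and M^3 = 1 by Cayley-Hamilton.  Their differentials at A,
   H |-> 3 tr (A^2 H), 6 tr (A H), -3 tr H, take the values of the identity matrix on
   the directions A/9, A^2/18, -1/9, so the Jacobian has rank 6.  Finally tr M = tr M^2 = 0
   holds for A_Theta and is preserved by transposition, inversion, conjugation and
   scaling, so pi(A_Theta) and pi(B_Theta) both have characteristic polynomial X^3 - 1. *)

From HB Require Import structures.
From mathcomp Require Import all_boot all_order all_algebra.
From mathcomp Require Import reals sequences exp.
From mathcomp Require Import mpoly.
From mathcomp Require Import ring lra.
Import Order.TTheory GRing.Theory Num.Theory.
Local Open Scope ring_scope.
Set Implicit Arguments.
Unset Strict Implicit.
Unset Printing Implicit Defensive.

(* Doubled, so that the second coefficient (tr^2 M - tr M^2) / 2 needs no division. *)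
Lemma cayley_hamilton3 (T : comNzRingType) (M : 'M[T]_3) :
  M ^+ 3 *+ 2 - (\tr M *+ 2) *: M ^+ 2 + (\tr M ^+ 2 - \tr (M ^+ 2)) *: M
    = (\det M *+ 2)%:M.
Proof.
(* Entries indexed by nat, so that [ring] identifies the atoms coming from [lift]
   with those coming from the case analysis on [i] and [j]. *)
pose e (a b : nat) : T := M (inord a) (inord b).
have eE i j : M i j = e i j by rewrite /e !inord_val.
rewrite (expand_det_row _ ord0) !big_ord_recl big_ord0 /cofactor.
rewrite !(expand_det_row _ ord0) !big_ord_recl !big_ord0 /cofactor !det_mx11.
rewrite /mxtrace !exprS expr0 !mulr1 -!mulmxE.
apply/matrixP => i j; rewrite !mxE !big_ord_recl !big_ord0 !mxE.
rewrite !big_ord_recl !big_ord0 !eE /= /bump /= !addn0 !add1n.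
by case: i => [[|[|[|?]]] ?] //; case: j => [[|[|[|?]]] ?] // /=; ring.
Qed.

Section PureCubic.
Variable R : numFieldType.
Implicit Types M P Q : 'M[R]_3.

(* By Cayley-Hamilton, this says that the characteristic polynomial of [M] is
   the pure cubic [X^3 - det M]. *)
Definition pure_cubic M := \tr M = 0 /\ \tr (M ^+ 2) = 0.

Lemma pure_cubic_exp3 M : pure_cubic M -> M ^+ 3 = (\det M)%:M.
Proof.
move=> [trM trM2]; apply: (scalerI (a := 2%:R)); first by rewrite pnatr_eq0.
have := cayley_hamilton3 M; rewrite trM trM2 mul0rn expr0n subrr !scale0r.
by rewrite subr0 addr0 !scaler_nat => ->; rewrite raddfMn.
Qed.

Lemma pure_cubic_scale a M : pure_cubic M -> pure_cubic (a *: M).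
Proof. by move=> [trM trM2]; split; rewrite ?exprZn mxtraceZ ?trM ?trM2 mulr0. Qed.

Lemma pure_cubic_sqr M : pure_cubic M -> pure_cubic (M ^+ 2).
Proof.
move=> pM; split; first by case: pM.
rewrite -exprM (exprS M 3) pure_cubic_exp3 //.
by rewrite -mulmxE mul_mx_scalar mxtraceZ; case: pM => -> _; rewrite mulr0.
Qed.

Lemma pure_cubic_trmx M : pure_cubic M -> pure_cubic M^T.
Proof.
move=> [trM trM2]; split; first by rewrite mxtrace_tr.
by rewrite expr2 -mulmxE -trmx_mul mxtrace_tr mulmxE -expr2.
Qed.

Lemma pure_cubic_conj M P Q : Q *m P = 1%:M -> pure_cubic M -> pure_cubic (Q *m M *m P).
Proof.
move=> QP [trM trM2]; have PQ := mulmx1C QP.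
have conjM N : \tr (Q *m N *m P) = \tr N by rewrite mxtrace_mulC mulmxA PQ mul1mx.
split; first by rewrite conjM.
suff -> : (Q *m M *m P) ^+ 2 = Q *m M ^+ 2 *m P by rewrite conjM.
by rewrite !expr2 -!mulmxE !mulmxA -[Q *m M *m P *m Q]mulmxA PQ mulmx1.
Qed.

Lemma invmx_pure_cubic M : pure_cubic M -> \det M != 0 -> invmx M = (\det M)^-1 *: M ^+ 2.
Proof.
move=> pM dM; have uM : M \in unitmx by rewrite unitmxE unitfE.
have MV : M *m ((\det M)^-1 *: M ^+ 2) = 1%:M.
  by rewrite -scalemxAr mulmxE -exprS pure_cubic_exp3 // scale_scalar_mx mulVf.
by rewrite -[invmx M]mulmx1 -MV mulmxA mulVmx // mul1mx.
Qed.

Lemma pure_cubic_invmx M : pure_cubic M -> \det M != 0 -> pure_cubic (invmx M).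
Proof. by move=> pM dM; rewrite invmx_pure_cubic //; apply/pure_cubic_scale/pure_cubic_sqr. Qed.

Lemma pure_cubic_det1_exp3 M : pure_cubic M -> \det M = 1 -> M ^+ 3 = 1.
Proof. by move=> pM dM; rewrite pure_cubic_exp3 // dM. Qed.

Lemma det1_of_power_traces M :
  \tr M = 0 -> \tr (M ^+ 2) = 0 -> \tr (M ^+ 3) = 3%:R -> \det M = 1.
Proof.
move=> trM trM2 trM3; have := congr1 mxtrace (cayley_hamilton3 M).
rewrite trM trM2 mul0rn expr0n subrr !scale0r subr0 addr0 -scaler_nat mxtraceZ.
rewrite mxtrace_scalar trM3 => /eqP; rewrite -subr_eq0 => /eqP h.
have : (1 - \det M) * 6%:R = 0 by rewrite -h; ring.
by move/eqP; rewrite mulf_eq0 pnatr_eq0 orbF subr_eq0 => /eqP.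
Qed.

End PureCubic.

Section Order3Equations.
Variable T : comNzRingType.
Implicit Types A H M : 'M[T]_3.

(* Over the reals these vanish on {M | M^3 = 1, det M = 1} = {1} U {M | char M = X^3 - 1},
   and cut out this set near any of its points with trace 0. *)
Definition order3_eq M (j : 'I_3) : T :=
  [:: \tr (M ^+ 3) - 3%:R; \tr (M ^+ 2) *+ 3 - \tr M ^+ 2; \tr M * (\tr M - 3%:R)]`_j.

Definition order3_eq_diff A H (j : 'I_3) : T :=
  [:: \tr (A ^+ 2 *m H) *+ 3; \tr (A *m H) *+ 6 - \tr A * \tr H *+ 2;
      \tr H * (\tr A *+ 2 - 3%:R)]`_j.

Lemma order3_eq_diff0 A j : order3_eq_diff A 0 j = 0.
Proof.
by case: j => [[|[|[|?]]] ?] //;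
  rewrite /order3_eq_diff /= ?mulmx0 mxtrace0 ?(mul0rn, mulr0, mul0r, subrr).
Qed.

End Order3Equations.

Lemma order3_eq_map (T S : comNzRingType) (f : {rmorphism T -> S}) (M : 'M[T]_3) j :
  order3_eq (map_mx f M) j = f (order3_eq M j).
Proof.
by case: j => [[|[|[|?]]] ?] //; rewrite /order3_eq /= -?rmorphXn !trace_map_mx
  !(rmorph_nat, rmorphXn, rmorphB, rmorphM, rmorphMn).
Qed.

Section DirectionalDerivative.
Variables (R : comNzRingType) (n : nat) (x h : 'I_n -> R).
Implicit Types p q : {mpoly R[n]}.

Definition dirderiv p := \sum_(i < n) (mderiv i p).@[x] * h i.

Fact dirderiv_is_zmod_morphism : zmod_morphism dirderiv.
Proof.
move=> p q; rewrite /dirderiv -sumrB; apply: eq_bigr => i _.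
by rewrite mderivB mevalB mulrBl.
Qed.

HB.instance Definition _ :=
  GRing.isZmodMorphism.Build {mpoly R[n]} R dirderiv dirderiv_is_zmod_morphism.

Lemma dirderivM p q : dirderiv (p * q) = dirderiv p * q.@[x] + p.@[x] * dirderiv q.
Proof.
rewrite /dirderiv mulr_suml mulr_sumr -big_split; apply: eq_bigr => i _ /=.
by rewrite mderivM mevalD !mevalM; ring.
Qed.

Lemma dirderivC c : dirderiv c%:MP = 0.
Proof. by rewrite /dirderiv big1 // => i _; rewrite mderivC meval0 mul0r. Qed.

Lemma dirderivXU i : dirderiv 'X_i = h i.
Proof.
rewrite /dirderiv (bigD1 i) //= big1 ?addr0 => [|j /negbTE ji].
  rewrite mderivX mnm1E eqxx.
  have -> : (U_(i) - U_(i) = 0)%MM by apply/mnmP => k; rewrite mnmBE subnn mnm0E.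
  by rewrite mpolyX0 mevalZ meval1 mulr1 mul1r.
by rewrite mderivX mnm1E eq_sym ji scale0r meval0 mul0r.
Qed.

Lemma dirderiv1 : dirderiv 1 = 0.
Proof. by rewrite -mpolyC1 dirderivC. Qed.

Lemma dirderiv_trace d (M : 'M_d) : dirderiv (\tr M) = \tr (map_mx dirderiv M).
Proof. by rewrite raddf_sum; apply: eq_bigr => i _; rewrite mxE. Qed.

Lemma map_dirderiv_mulmx m k l (M : 'M_(m, k)) (N : 'M_(k, l)) :
  map_mx dirderiv (M *m N) =
    map_mx dirderiv M *m map_mx (meval x) N + map_mx (meval x) M *m map_mx dirderiv N.
Proof.
apply/matrixP => i j; rewrite !mxE raddf_sum -big_split; apply: eq_bigr => r _ /=.
by rewrite !mxE dirderivM.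
Qed.

Section PowerTraces.
Variables (d : nat) (G : 'M[{mpoly R[n]}]_d.+1).
Let A := map_mx (meval x) G.
Let H := map_mx dirderiv G.

Lemma map_dirderiv_exp k :
  map_mx dirderiv (G ^+ k.+1) = \sum_(i < k.+1) A ^+ i *m H *m A ^+ (k - i).
Proof.
elim: k => [|k IHk]; first by rewrite expr1 big_ord1 !expr0 mul1mx mulmx1.
rewrite exprSr -mulmxE map_dirderiv_mulmx IHk rmorphXn -/A -/H.
rewrite [in RHS]big_ord_recr /= subnn expr0 mulmx1 mulmx_suml; congr (_ + _).
apply: eq_bigr => i _.
by rewrite -mulmxA mulmxE -exprSr subSn // -ltnS.
Qed.

Lemma dirderiv_trace_exp k : dirderiv (\tr (G ^+ k.+1)) = \tr (A ^+ k *m H) *+ k.+1.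
Proof.
rewrite dirderiv_trace map_dirderiv_exp raddf_sum -[k.+1 in RHS]card_ord -sumr_const.
apply: eq_bigr => i _ /=; rewrite mxtrace_mulC mulmxA mulmxE -exprD subnK //.
by rewrite -ltnS.
Qed.

End PowerTraces.

Lemma dirderiv_order3_eq (G : 'M_3) j :
  dirderiv (order3_eq G j) = order3_eq_diff (map_mx (meval x) G) (map_mx dirderiv G) j.
Proof.
have trG : dirderiv (\tr G) = \tr (map_mx dirderiv G) by rewrite dirderiv_trace.
case: j => [[|[|[|?]]] ?] //; rewrite /order3_eq /order3_eq_diff /=.
- by rewrite raddfB raddfMn /= dirderiv1 mul0rn subr0 dirderiv_trace_exp.
- rewrite raddfB raddfMn /= dirderiv_trace_exp expr2 dirderivM trG -trace_map_mx expr1.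
  ring.
- rewrite dirderivM !raddfB !raddfMn /= dirderiv1 meval1 trG -trace_map_mx; ring.
Qed.

End DirectionalDerivative.

Lemma mxtrace_dist_lt (R : numDomainType) n (A B : 'M[R]_n.+1) e :
  (forall i, `|A i i - B i i| < e) -> `|\tr A - \tr B| < e *+ n.+1.
Proof.
move=> AB; rewrite -raddfB /= -[X in _ < _ *+ X]card_ord -sumr_const.
apply: le_lt_trans (ler_norm_sum _ _ _) _.
by apply: ltr_sum => [|i _]; [apply/hasP; exists ord0; rewrite ?mem_index_enum | rewrite !mxE].
Qed.

Section RealOrder3.
Variable R : realFieldType.
Implicit Types M : 'M[R]_3.

(* [t] and [p] stand for tr M and tr M^2, where M^3 = 1 = det M; the hypotheses are
   the traces of (t^2 - p) M = 2t M^2 and of (t^2 - p) M^2 = 2t. *)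
Lemma power_sums_order3 (t p : R) :
  (t ^+ 2 - p) * t = t *+ 2 * p -> (t ^+ 2 - p) * p = t *+ 6 ->
  p *+ 3 = t ^+ 2 /\ t * (t - 3%:R) = 0.
Proof.
move=> e1 e2; have [t0|t0] := eqVneq t 0.
  subst t; have p0 : p = 0 by apply/eqP; rewrite -sqrf_eq0; apply/eqP; nra.
  by subst p; split; ring.
have tp : t ^+ 2 = p *+ 3 by apply: (mulIf t0); nra.
split=> //.
have : (t - 3%:R) * (t ^+ 2 + t *+ 3 + 9%:R) = 0 by apply: (mulIf t0); nra.
by move/eqP; rewrite mulf_eq0 => /orP[/eqP ->|/eqP h]; [rewrite mulr0 | nra].
Qed.

Lemma order3_eq_vanish M j : \det M = 1 -> M ^+ 3 = 1 -> order3_eq M j = 0.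
Proof.
move=> detM M3; set t := \tr M; set p := \tr (M ^+ 2).
have E1 : (t ^+ 2 - p) *: M = (t *+ 2) *: M ^+ 2.
  have := cayley_hamilton3 M; rewrite M3 detM -/t -/p raddfMn -addrA.
  by move/(canRL (addKr _)); rewrite addNr => /eqP; rewrite addrC subr_eq0 => /eqP.
have E2 : (t ^+ 2 - p) *: M ^+ 2 = (t *+ 2) *: 1.
  by rewrite expr2 scalerAl E1 -scalerAl -exprSr M3.
have [p3 t3] : p *+ 3 = t ^+ 2 /\ t * (t - 3%:R) = 0.
  apply: power_sums_order3.
    by have := congr1 mxtrace E1; rewrite !mxtraceZ.
  by have := congr1 mxtrace E2; rewrite !mxtraceZ mxtrace1 => ->; rewrite mulr_natr -mulrnA.
by case: j => [[|[|[|?]]] ?] //; rewrite /order3_eq /= ?M3 ?mxtrace1 ?subrr // -/t -/p p3 subrr.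
Qed.

Lemma order3_eq_pure_cubic M :
  (forall j, order3_eq M j = 0) -> \tr M != 3%:R -> pure_cubic M /\ \det M = 1.
Proof.
move=> eqM trM_neq3.
have trM : \tr M = 0.
  have /eqP := eqM (Ordinal (isT : (2 < 3)%N)); rewrite /order3_eq /= mulf_eq0.
  by rewrite subr_eq0 (negbTE trM_neq3) orbF => /eqP.
have trM2 : \tr (M ^+ 2) = 0.
  have /eqP := eqM (Ordinal (isT : (1 < 3)%N)).
  by rewrite /order3_eq /= trM expr0n subr0 mulrn_eq0 => /eqP.
split; first by split.
apply: det1_of_power_traces => //.
by have /eqP := eqM (Ordinal (isT : (0 < 3)%N)); rewrite /order3_eq /= subr_eq0 => /eqP.
Qed.

Lemma order3_eq_near M M0 : \tr M0 = 0 -> (forall i, `|M i i - M0 i i| < 1) ->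
  (forall j, order3_eq M j = 0) -> \det M = 1 /\ M ^+ 3 = 1.
Proof.
move=> trM0 nearM eqM; have /mxtrace_dist_lt := nearM; rewrite trM0 subr0 => trM.
have [pM detM] : pure_cubic M /\ \det M = 1.
  by apply: order3_eq_pure_cubic eqM _; apply: contraTneq trM => ->; rewrite normr_nat ltxx.
by split; last exact: pure_cubic_det1_exp3.
Qed.

Definition order3_tangent M (j : 'I_3) : 'M[R]_3 :=
  [:: 9%:R^-1 *: M; 18%:R^-1 *: M ^+ 2; - 9%:R^-1 *: 1]`_j.

Lemma order3_eq_diff_tangent M j k : pure_cubic M -> \det M = 1 ->
  order3_eq_diff M (order3_tangent M k) j = (j == k)%:R.
Proof.
move=> pM detM; have M3 := pure_cubic_det1_exp3 pM detM.
have trX i : \tr (M ^+ i) = if (3 %| i)%N then 3%:R else 0.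
  rewrite {1}(divn_eq i 3) exprD mulnC exprM M3 expr1n mul1r /dvdn.
  case: (i %% 3)%N (ltn_pmod i (isT : (0 < 3)%N)) => [|[|[|//]]] _ /=.
  - by rewrite expr0 mxtrace1.
  - by rewrite expr1; case: pM.
  - by case: pM.
case: pM => trM _.
case: j => [[|[|[|?]]] ?] //; case: k => [[|[|[|?]]] ?] //;
  rewrite /order3_eq_diff /order3_tangent /= -?scalemxAr ?mulmx1 ?mxtraceZ ?mulmxE.
all: rewrite -?exprSr -?exprS -?exprD -?expr2 ?trX ?trM ?mxtrace1 /=.
all: by field.
Qed.

End RealOrder3.

Section HomVariety.
Variable R : realType.
Local Notation N := (3 * 3 + 3 * 3)%N.
Implicit Types A B H K : 'M[R]_3.

Lemma pair_coordK (y : 'rV[R]_N) : pair_coord (vec_mx (lsubmx y)) (vec_mx (rsubmx y)) = y.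
Proof. by rewrite /pair_coord !vec_mxK hsubmxK. Qed.

Definition fst_coord i j : 'I_N := lshift (3 * 3) (mxvec_index i j).
Definition snd_coord i j : 'I_N := rshift (3 * 3) (mxvec_index i j).

Lemma pair_coord_fst A B i j : pair_coord A B 0 (fst_coord i j) = A i j.
Proof. by rewrite /pair_coord row_mxEl mxvecE. Qed.

Lemma pair_coord_snd A B i j : pair_coord A B 0 (snd_coord i j) = B i j.
Proof. by rewrite /pair_coord row_mxEr mxvecE. Qed.

Definition var_mx (c : 'I_3 -> 'I_3 -> 'I_N) : 'M[{mpoly R[N]}]_3 :=
  \matrix_(i, j) 'X_(c i j).

Definition hom_eq (k : 'I_(3 + 3)) : {mpoly R[N]} :=
  match split k with
  | inl j => order3_eq (var_mx fst_coord) j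
  | inr j => order3_eq (var_mx snd_coord) j
  end.

Lemma meval_hom_eq A B k :
  (hom_eq k).@[fun i => pair_coord A B 0 i] =
    match split k with inl j => order3_eq A j | inr j => order3_eq B j end.
Proof.
rewrite /hom_eq; case: split => j; rewrite -order3_eq_map; congr order3_eq.
  by apply/matrixP => i l; rewrite /var_mx !mxE /= mevalXU pair_coord_fst.
by apply/matrixP => i l; rewrite /var_mx !mxE /= mevalXU pair_coord_snd.
Qed.

Lemma dirderiv_hom_eq A B H K k :
  dirderiv (fun i => pair_coord A B 0 i) (fun i => pair_coord H K 0 i) (hom_eq k) =
    match split k with inl j => order3_eq_diff A H j | inr j => order3_eq_diff B K j end.
Proof.
rewrite /hom_eq; case: split => j; rewrite dirderiv_order3_eq; congr order3_eq_diff.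
- by apply/matrixP => i l; rewrite /var_mx !mxE /= mevalXU pair_coord_fst.
- by apply/matrixP => i l; rewrite /var_mx !mxE /= dirderivXU pair_coord_fst.
- by apply/matrixP => i l; rewrite /var_mx !mxE /= mevalXU pair_coord_snd.
- by apply/matrixP => i l; rewrite /var_mx !mxE /= dirderivXU pair_coord_snd.
Qed.

Lemma hom_eq_vanish (y : 'rV[R]_N) k : HomVar y -> (hom_eq k).@[fun i => y 0 i] = 0.
Proof.
case=> A [B [-> detA detB A3 B3]]; rewrite meval_hom_eq.
by case: split => j; apply: order3_eq_vanish.
Qed.

Definition tangent_mx A B : 'M[R]_(N, 3 + 3) :=
  \matrix_(i, l) (match split l with
                  | inl j => pair_coord (order3_tangent A j) 0
                  | inr j => pair_coord 0 (order3_tangent B j)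
                  end) 0 i.

Lemma jacobian_hom_eq_tangent A B :
  pure_cubic A -> pure_cubic B -> \det A = 1 -> \det B = 1 ->
  \matrix_(k < 3 + 3, i < N) (mderiv i (hom_eq k)).@[fun j => pair_coord A B 0 j]
    *m tangent_mx A B = 1%:M.
Proof.
move=> pA pB detA detB; apply/matrixP => k l; rewrite !mxE.
under eq_bigr do rewrite !mxE.
rewrite -[k]splitK -[l]splitK; case: (split l) => j'; case: (split k) => j;
  rewrite !unsplitK /= -[X in X = _]/(dirderiv _ _ _) dirderiv_hom_eq;
  rewrite ?(unsplitK (inl j : 'I_3 + 'I_3)) ?(unsplitK (inr j : 'I_3 + 'I_3));
  rewrite ?eq_lshift ?eq_rshift ?eq_lrshift ?eq_rlshift ?order3_eq_diff0 //;
  exact: order3_eq_diff_tangent.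
Qed.

Lemma HomVar_of_hom_eq A0 B0 (y : 'rV[R]_N) :
  pure_cubic A0 -> pure_cubic B0 ->
  (forall i, `|y 0 i - pair_coord A0 B0 0 i| < 1) ->
  (forall k, (hom_eq k).@[fun i => y 0 i] = 0) -> HomVar y.
Proof.
rewrite -(pair_coordK y); set A := vec_mx _; set B := vec_mx _.
move=> [trA0 _] [trB0 _] near eqs.
have [detA A3] : \det A = 1 /\ A ^+ 3 = 1.
  apply: (order3_eq_near trA0) => [i|j].
    by have := near (fst_coord i i); rewrite !pair_coord_fst.
  by have := eqs (unsplit (inl j)); rewrite meval_hom_eq unsplitK.
have [detB B3] : \det B = 1 /\ B ^+ 3 = 1.
  apply: (order3_eq_near trB0) => [i|j].
    by have := near (snd_coord i i); rewrite !pair_coord_snd.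
  by have := eqs (unsplit (inr j)); rewrite meval_hom_eq unsplitK.
by exists A, B.
Qed.

Lemma smooth_point_pure_cubic A B :
  pure_cubic A -> pure_cubic B -> \det A = 1 -> \det B = 1 ->
  smooth_point (@HomVar R) (pair_coord A B).
Proof.
move=> pA pB detA detB; split.
  by exists A, B; split; rewrite ?pure_cubic_det1_exp3.
exists (3 + 3)%N, hom_eq; split.
- by move=> y Vy k; apply: hom_eq_vanish.
- apply/eqP; rewrite eqn_leq rank_leq_row /=.
  by rewrite -[X in (X <= _)%N](mxrank1 R) -(jacobian_hom_eq_tangent pA pB) // mxrankM_maxl.
- exists 1 => // y near; split; first by move=> Vy k; apply: hom_eq_vanish.
  exact: HomVar_of_hom_eq pA pB near.
Qed.

End HomVariety.

Section Theta.
Variable R : realType.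

Lemma cbrt_exp3 (x : R) : cbrt x ^+ 3 = x.
Proof.
have powR3 (y : R) : 0 <= y -> (y `^ 3^-1) ^+ 3 = y.
  move=> y_ge0; rewrite -powR_mulrn ?powR_ge0 // -powRrM mulVf ?pnatr_eq0 //.
  exact: powRr1.
rewrite /cbrt exprMn; case: sgrP => [->|x_gt0|x_lt0]; first by rewrite expr0n mul0r.
  by rewrite expr1n mul1r powR3 // ltW.
by rewrite powR3 ?oppr_ge0 ?ltW //; ring.
Qed.

Lemma piSL_pure_cubic (M : 'M[R]_3) : pure_cubic M -> \det M != 0 ->
  pure_cubic (piSL M) /\ \det (piSL M) = 1.
Proof.
move=> pM detM; split; first exact: pure_cubic_scale.
by rewrite detZ exprVn cbrt_exp3 mulVf.
Qed.

Lemma det_mx3 (a b c d e f g h k : R) :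
  \det (mx3 a b c d e f g h k) =
    a * e * k + b * f * g + c * d * h - c * e * g - b * d * k - a * f * h.
Proof.
rewrite (expand_det_row _ ord0) !big_ord_recl big_ord0 /cofactor.
rewrite !(expand_det_row _ ord0) !big_ord_recl !big_ord0 /cofactor !det_mx11.
by rewrite !mxE /= /bump /=; ring.
Qed.

Lemma mxtrace_mx3 (a b c d e f g h k : R) :
  \tr (mx3 a b c d e f g h k) = a + e + k.
Proof. by rewrite /mxtrace /mx3 !big_ord_recl big_ord0 !mxE /=; ring. Qed.

Lemma mxtrace_sqr_mx3 (a b c d e f g h k : R) :
  \tr (mx3 a b c d e f g h k ^+ 2) = a ^+ 2 + e ^+ 2 + k ^+ 2 + (b * d + c * g + f * h) *+ 2.
Proof. by rewrite /mxtrace /mx3 expr2 -mulmxE !(mxE, big_ord_recl, big_ord0) /=; ring. Qed.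

Lemma det_Sigma (eps del : R) : \det (Sigma eps del) = 1.
Proof.
rewrite det_mx3 /coshR /sinhR !expRN.
have := expR_gt0 eps; have := expR_gt0 del; rewrite !lt0r => /andP[del0 _] /andP[eps0 _].
by field; rewrite eps0 del0.
Qed.

Variables (zt zb : R).
Hypotheses (zt_bound : -1 < zt < 1) (zb_bound : -1 < zb < 1).

Lemma pure_cubic_A_Theta : pure_cubic (A_Theta zt zb).
Proof. by split; rewrite /A_Theta ?mxtrace_mx3 ?mxtrace_sqr_mx3; ring. Qed.

Lemma det_A_Theta_neq0 : \det (A_Theta zt zb) != 0.
Proof.
rewrite det_mx3 (_ : _ - _ = - ((1 - zt ^+ 2) ^+ 2 * (1 - zb ^+ 2))); last by ring.
case/andP: zt_bound => ? ?; case/andP: zb_bound => ? ?.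
by rewrite oppr_eq0 mulf_neq0 ?expf_neq0 // gt_eqF //; nra.
Qed.

Lemma det_D_Theta_neq0 : \det (D_Theta zt zb) != 0.
Proof.
rewrite det_mx3 (_ : _ - _ = (1 - zt ^+ 2) * (1 - zb ^+ 2)); last by ring.
case/andP: zt_bound => ? ?; case/andP: zb_bound => ? ?.
by rewrite mulf_neq0 // gt_eqF //; nra.
Qed.

Lemma pure_cubic_B_Theta (eps del : R) :
  pure_cubic (B_Theta zt zb eps del) /\ \det (B_Theta zt zb eps del) != 0.
Proof.
set A := A_Theta zt zb; set D := D_Theta zt zb; set S := Sigma eps del.
have uD : D \in unitmx by rewrite unitmxE unitfE det_D_Theta_neq0.
have uS : S \in unitmx by rewrite unitmxE unitfE det_Sigma oner_eq0.
have detAT : \det A^T != 0 by rewrite det_tr det_A_Theta_neq0.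
have QP : invmx S *m invmx D *m (D *m S) = 1%:M.
  by rewrite mulmxA -[_ *m invmx D *m D]mulmxA mulVmx // mulmx1 mulVmx.
rewrite (_ : B_Theta _ _ _ _ = invmx S *m invmx D *m invmx A^T *m (D *m S)); last first.
  by rewrite /B_Theta !mulmxA.
split.
  exact: pure_cubic_conj QP (pure_cubic_invmx (pure_cubic_trmx pure_cubic_A_Theta) detAT).
by rewrite !det_mulmx !det_inv det_Sigma !mulf_neq0 ?invr_eq0 ?oner_eq0 ?det_D_Theta_neq0.
Qed.

End Theta.

Theorem lemma11p2 (R : realType) (zt zb eps del : R) :
  -1 < zt < 1 -> -1 < zb < 1 -> in_region eps del ->
  smooth_point (@HomVar R)
    (pair_coord (piSL (A_Theta zt zb)) (piSL (B_Theta zt zb eps del))).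
Proof.
move=> zt_bound zb_bound _.
have [pA detA] :=
  piSL_pure_cubic (pure_cubic_A_Theta zt zb) (det_A_Theta_neq0 zt_bound zb_bound).
have [pB0 detB0] := pure_cubic_B_Theta zt_bound zb_bound eps del.
have [pB detB] := piSL_pure_cubic pB0 detB0.
exact: smooth_point_pure_cubic.
Qed.
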